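(* Let $O=(O_i)_{i\in\overline{\mathbb V}}\in\mathbb R_+^{\overline{\mathbb V}}$ with $O_i=T_i$ for $i\in\partial\mathbb V$, and let $K=(K_i)_{i\in\overline{\mathbb V}}\in\mathbb N_0^{\overline{\mathbb V}}$. Then for every $t\ge0$, $\mathbb E_O\left(\prod_{i\in\overline{\mathbb V}}O_i(t)^{K_i}\right)=\mathbb E_K\left(\prod_{i\in\overline{\mathbb V}}O_i^{K_i(t)}\right),$ where on the left the expectation is over the opinion process $O(t)$ started from $O$ (with $K$ fixed), and on the right over the absorbed discrete KMP process $K(t)$ started from $K$ (with $O$ fixed).
   Context: Graph: $(\overline{\mathbb V},\overline E)$ is a finite oriented graph; $\overline{\mathbb V}=\mathbb V\cup\partial\mathbb V$ (internal and boundary vertices). $E$ is the set of edges with both endpoints in $\mathbb V$, $\partial E$ the set of edges with one endpoint in $\partial\mathbb V$; no edges join two boundary vertices; every boundary edge is written $ij$ with $i\in\mathbb V$, $j\in\partial\mathbb V$; $\overline E=E\cup\partial E$, at most one edge per pair of vertices. Each $j\in\partial\mathbb V$ carries a fixed value $T_j>0$. $\mathbb N_0=\{0,1,2,\dots\}$. Opinion process: Markov process on $\mathbb R_+^{\overline{\mathbb V}}$ with $O_j\equiv T_j$ for $j\in\partial\mathbb V$ and generator $L^Of(O)=\sum_{ij\in\overline E}\int_0^1dv\,[f(H^O_{ij;v}O)-f(O)]$, where $(H^O_{ij;v}O)_\ell=vO_i+(1-v)O_j$ for $\ell\in\{i,j\}\cap\mathbb V$ and $(H^O_{ij;v}O)_\ell=O_\ell$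 otherwise. Absorbed discrete KMP process: Markov process on $\mathbb N_0^{\overline{\mathbb V}}$ with generator $L^K_0f(\underline k)=\sum_{ij\in E}\frac1{k_i+k_j+1}\sum_{h=0}^{k_i+k_j}[f(H_{ij;h}\underline k)-f(\underline k)]+\sum_{ij\in\partial E}\frac1{k_i+1}\sum_{h=0}^{k_i}[f(H_{ij;h}\underline k)-f(\underline k)]$, where $(H_{ij;h}\underline k)_i=h$, $(H_{ij;h}\underline k)_j=k_i+k_j-h$, and other coordinates unchanged. *)

From Stdlib Require Import Bool Reals List Arith Lra.
From Coquelicot Require Import Coquelicot.
Open Scope R_scope.

(* Vertices are natural numbers; configurations are functions on vertices
   (coordinates outside V-bar are irrelevant). An oriented edge is a pair (i,j). *)

Definition inb (l : nat) (s : list nat) : bool :=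
  existsb (fun x => Nat.eqb x l) s.

Definition sumR {A} (f : A -> R) (s : list A) : R :=
  fold_right (fun a acc => f a + acc) 0 s.

Definition prodR {A} (f : A -> R) (s : list A) : R :=
  fold_right (fun a acc => f a * acc) 1 s.

Definition wf_graph (intV bdV : list nat) (E dE : list (nat * nat)) : Prop :=
  NoDup (intV ++ bdV) /\
  (forall e, In e E -> In (fst e) intV /\ In (snd e) intV /\ fst e <> snd e) /\
  (forall e, In e dE -> In (fst e) intV /\ In (snd e) bdV) /\
  NoDup (E ++ dE) /\
  (forall i j, In (i, j) (E ++ dE) -> ~ In (j, i) (E ++ dE)).

Definition HO (intV : list nat) (e : nat * nat) (v : R) (O : nat -> R) : nat -> R :=
  fun l => if andb (orb (Nat.eqb l (fst e)) (Nat.eqb l (snd e))) (inb l intV)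
           then v * O (fst e) + (1 - v) * O (snd e) else O l.

Definition LO (intV : list nat) (E dE : list (nat * nat))
    (f : (nat -> R) -> R) : (nat -> R) -> R :=
  fun O => sumR (fun e => RInt (fun v => f (HO intV e v O) - f O) 0 1) (E ++ dE).

Definition HK (e : nat * nat) (h : nat) (k : nat -> nat) : nat -> nat :=
  fun l => if Nat.eqb l (fst e) then h
           else if Nat.eqb l (snd e) then (k (fst e) + k (snd e) - h)%nat
           else k l.

Definition LK (E dE : list (nat * nat)) (f : (nat -> nat) -> R) : (nat -> nat) -> R :=
  fun k =>
    sumR (fun e => / INR (k (fst e) + k (snd e) + 1) *
            sumR (fun h => f (HK e h k) - f k) (seq 0 (k (fst e) + k (snd e) + 1)))
         E
  + sumR (fun e => / INR (k (fst e) + 1) *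
            sumR (fun h => f (HK e h k) - f k) (seq 0 (k (fst e) + 1)))
         dE.

Fixpoint iterL {X : Type} (L : (X -> R) -> (X -> R)) (n : nat) (f : X -> R) : X -> R :=
  match n with O => f | S n => L (iterL L n f) end.

(* [sg_value L f t x l] : E_x[f(X(t))] = (e^{tL} f)(x) = l, i.e. the series
   sum_n t^n/n! (L^n f)(x) converges to l. Both processes have bounded total jump
   rate |E-bar|, so e^{tL} is their Markov semigroup. *)
Definition sg_value {X : Type} (L : (X -> R) -> (X -> R)) (f : X -> R) (t : R) (x : X)
    (l : R) : Prop :=
  is_series (fun n => t ^ n / INR (fact n) * iterL L n f x) l.

Definition Dual (intV bdV : list nat) (O : nat -> R) (K : nat -> nat) : R :=
  prodR (fun i => O i ^ K i) (intV ++ bdV).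

From Stdlib Require Import Bool Reals List Lra Lia Arith.
From Coquelicot Require Import Coquelicot.
Open Scope R_scope.

(* Both sides are exponential series of the generators applied to the duality
   function D(O,K) = prod_i O_i^K_i, so it suffices to show
   (L^O)^n D(.,K) (O) = (L^K)^n D(O,.) (K) for every n and that the KMP series
   converges.

   For n = 1 the identity holds edge by edge: with w = K_i + K_j on a bulk edge
   and w = K_i on a boundary edge (whose boundary opinion O_j is frozen),
   int_0^1 (v O_i + (1 - v) O_j)^w dv = 1/(w+1) sum_{h=0}^{w} O_i^h O_j^(w-h),
   which is the uniform KMP redistribution of the w particles of the edge.
   Since (L^K)^n g (K) is a finite linear combination of values of g, and L^O
   is linear on finite combinations of duality functions, the identity
   propagates to all n by induction.

   KMP moves conserve the particle number, so with M bounding |O| one gets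
   |(L^K)^n D(O,.) (K)| <= (2 |E-bar|)^n M^|K|, and the series is dominated by
   an exponential series. *)

Lemma sumR_app {A} (f : A -> R) l1 l2 : sumR f (l1 ++ l2) = sumR f l1 + sumR f l2.
Proof. induction l1; simpl; [lra|]. rewrite IHl1; lra. Qed.

Lemma sumR_ext {A} (f g : A -> R) l :
  (forall x, In x l -> f x = g x) -> sumR f l = sumR g l.
Proof. induction l; simpl; intros H; [lra|]. rewrite H, IHl; auto. Qed.

Lemma sumR_plus {A} (f g : A -> R) l : sumR (fun x => f x + g x) l = sumR f l + sumR g l.
Proof. induction l; simpl; [lra|]. rewrite IHl; lra. Qed.

Lemma sumR_minus {A} (f g : A -> R) l : sumR (fun x => f x - g x) l = sumR f l - sumR g l.
Proof. induction l; simpl; [lra|]. rewrite IHl; lra. Qed.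

Lemma sumR_scal {A} (f : A -> R) c l : sumR (fun x => c * f x) l = c * sumR f l.
Proof. induction l; simpl; [lra|]. rewrite IHl; lra. Qed.

Lemma sumR_const {A} c (l : list A) : sumR (fun _ => c) l = INR (length l) * c.
Proof. induction l; simpl sumR; simpl length; [simpl; lra|]. rewrite IHl, S_INR; lra. Qed.

Lemma sumR_comm {A B} (f : A -> B -> R) la lb :
  sumR (fun a => sumR (f a) lb) la = sumR (fun b => sumR (fun a => f a b) la) lb.
Proof.
  induction la; simpl.
  - induction lb; simpl; lra.
  - rewrite IHla, <- sumR_plus. reflexivity.
Qed.

Lemma Rabs_sumR_le {A} (f : A -> R) l : Rabs (sumR f l) <= sumR (fun x => Rabs (f x)) l.
Proof.
  induction l; simpl; [rewrite Rabs_R0; lra|].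
  eapply Rle_trans; [apply Rabs_triang | lra].
Qed.

Lemma sumR_le {A} (f g : A -> R) l :
  (forall x, In x l -> f x <= g x) -> sumR f l <= sumR g l.
Proof. induction l; simpl; intros H; [lra|]. apply Rplus_le_compat; auto. Qed.

Lemma prodR_ext {A} (f g : A -> R) l :
  (forall x, In x l -> f x = g x) -> prodR f l = prodR g l.
Proof. induction l; simpl; intros H; [lra|]. rewrite H, IHl; auto. Qed.

Lemma Rabs_prodR_le {A} (f g : A -> R) l :
  (forall x, In x l -> Rabs (f x) <= g x) -> Rabs (prodR f l) <= prodR g l.
Proof.
  induction l; simpl; intros H; [rewrite Rabs_R1; lra|].
  rewrite Rabs_mult. apply Rmult_le_compat; try apply Rabs_pos; auto.
Qed.

Lemma prodR_split1 (f : nat -> R) l i : NoDup l -> In i l ->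
  prodR f l = f i * prodR (fun x => if Nat.eqb x i then 1 else f x) l.
Proof.
  induction l as [|a l IH]; simpl; intros Hnd Hi; [contradiction|].
  inversion Hnd as [|? ? Ha Hnd']; subst.
  destruct Hi as [<-|Hi].
  - rewrite Nat.eqb_refl, (prodR_ext (fun x => if Nat.eqb x a then 1 else f x) f l);
      [ring|].
    intros x Hx. destruct (Nat.eqb_spec x a); [subst; contradiction | auto].
  - destruct (Nat.eqb_spec a i); [subst; contradiction|].
    rewrite IH by auto. ring.
Qed.

Lemma prodR_split2 (f : nat -> R) l i j : NoDup l -> In i l -> In j l -> i <> j ->
  prodR f l =
  f i * f j * prodR (fun x => if Nat.eqb x i || Nat.eqb x j then 1 else f x) l.
Proof.
  intros Hnd Hi Hj Hij.
  rewrite (prodR_split1 f l i), (prodR_split1 _ l j) by auto.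
  destruct (Nat.eqb_spec j i); [congruence|].
  rewrite Rmult_assoc. do 2 f_equal. apply prodR_ext. intros x _.
  destruct (Nat.eqb_spec x i), (Nat.eqb_spec x j); reflexivity.
Qed.

Definition avg_upto (n : nat) (f : nat -> R) : R :=
  / INR (n + 1) * sumR f (seq 0 (n + 1)).

Lemma Rabs_avg_upto_le n f B :
  (forall h, (h <= n)%nat -> Rabs (f h) <= B) -> Rabs (avg_upto n f) <= B.
Proof.
  intros H. unfold avg_upto.
  assert (Hn : 0 < INR (n + 1)) by (apply lt_0_INR; lia).
  rewrite Rabs_mult, Rabs_inv, (Rabs_right (INR (n + 1))) by lra.
  apply Rmult_le_reg_l with (INR (n + 1)); [exact Hn|].
  rewrite <- Rmult_assoc, Rinv_r, Rmult_1_l by lra.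
  eapply Rle_trans; [apply Rabs_sumR_le|].
  rewrite <- length_seq with (start := 0%nat) (len := (n + 1)%nat) at 2.
  rewrite <- sumR_const. apply sumR_le.
  intros h Hh. apply in_seq in Hh. apply H. lia.
Qed.

Lemma geometric_sum_telescope a b n :
  (a - b) * sumR (fun h => a ^ h * b ^ (n - h)) (seq 0 (S n)) = a ^ S n - b ^ S n.
Proof.
  induction n.
  - simpl. ring.
  - rewrite (seq_S (S n)), sumR_app. simpl (sumR _ (_ :: nil)).
    rewrite Nat.sub_diag.
    rewrite (sumR_ext _ (fun h => b * (a ^ h * b ^ (n - h)))), sumR_scal.
    + set (s := sumR (fun h => a ^ h * b ^ (n - h)) (seq 0 (S n))) in *.
      replace (S n - S n)%nat with 0%nat by lia.
      transitivity (b * ((a - b) * s) + (a - b) * a ^ S n); [simpl; ring|].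
      rewrite IHn. simpl. ring.
    + intros h Hh. apply in_seq in Hh.
      replace (S n - h)%nat with (S (n - h)) by lia. simpl. ring.
Qed.

Lemma is_RInt_pow_affine a b n :
  is_RInt (fun v => (v * a + (1 - v) * b) ^ n) 0 1
          (avg_upto n (fun h => a ^ h * b ^ (n - h))).
Proof.
  unfold avg_upto. rewrite Nat.add_1_r.
  assert (Hn : INR (S n) <> 0) by (apply not_0_INR; lia).
  destruct (Req_dec a b) as [<- | Hab].
  - apply is_RInt_ext with (fun _ => a ^ n); [intros x _; f_equal; ring|].
    rewrite (sumR_ext _ (fun _ => a ^ n)), sumR_const, length_seq.
    + replace (/ INR (S n) * (INR (S n) * a ^ n)) with (scal (1 - 0) (a ^ n))
        by (unfold scal; simpl; unfold mult; simpl; field; exact Hn).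
      apply (is_RInt_const (V := R_NormedModule)).
    + intros h Hh. apply in_seq in Hh. rewrite <- pow_add. f_equal. lia.
  -     set (F := fun v => (v * a + (1 - v) * b) ^ S n / (INR (S n) * (a - b))).
    assert (Hd : a - b <> 0) by lra.
    replace (/ INR (S n) * sumR (fun h => a ^ h * b ^ (n - h)) (seq 0 (S n)))
      with (minus (F 1) (F 0)).
    + apply (is_RInt_derive (V := R_CompleteNormedModule) F).
      * intros x _. unfold F. auto_derive; [auto|].
        replace (1 + - x) with (1 - x) by ring. field. auto.
      * intros x _. apply (ex_derive_continuous (V := R_NormedModule)). auto_derive; auto.
    + change (F 1 - F 0 = / INR (S n) * sumR (fun h => a ^ h * b ^ (n - h)) (seq 0 (S n))).
      unfold F.
      replace (1 * a + (1 - 1) * b) with a by ring.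
      replace (0 * a + (1 - 0) * b) with b by ring.
      transitivity ((a ^ S n - b ^ S n) / (INR (S n) * (a - b))); [field; auto|].
      rewrite <- geometric_sum_telescope. field. auto.
Qed.

Lemma avg_upto_affine n f C D0 :
  avg_upto n (fun h => f h * C - D0) = avg_upto n f * C - D0.
Proof.
  unfold avg_upto. rewrite sumR_minus, sumR_const, length_seq.
  rewrite (sumR_ext _ (fun h => C * f h)), sumR_scal by (intros; ring).
  assert (INR (n + 1) <> 0) by (apply not_0_INR; lia).
  field. assumption.
Qed.

Lemma is_RInt_pow_affine_avg a b n C D0 :
  is_RInt (fun v => (v * a + (1 - v) * b) ^ n * C - D0) 0 1
          (avg_upto n (fun h => a ^ h * b ^ (n - h) * C - D0)).
Proof.
  rewrite avg_upto_affine.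
  replace (avg_upto n (fun h => a ^ h * b ^ (n - h)) * C - D0)
    with (minus (scal C (avg_upto n (fun h => a ^ h * b ^ (n - h)))) (scal (1 - 0) D0))
    by (unfold minus, plus, opp, scal; simpl; unfold mult; simpl; ring).
  apply (is_RInt_minus (V := R_NormedModule)).
  - apply is_RInt_ext with (fun v => scal C ((v * a + (1 - v) * b) ^ n)).
    { intros x _. unfold scal; simpl; unfold mult; simpl. ring. }
    apply (is_RInt_scal (V := R_NormedModule)), is_RInt_pow_affine.
  - apply (is_RInt_const (V := R_NormedModule)).
Qed.

Lemma inb_In l s : inb l s = true <-> In l s.
Proof.
  unfold inb. rewrite existsb_exists. split.
  - intros [x [Hx He]]. apply Nat.eqb_eq in He. subst. assumption.
  - intros H. exists l. split; [assumption | apply Nat.eqb_refl].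
Qed.

Lemma NoDup_app_disjoint (l1 l2 : list nat) a : NoDup (l1 ++ l2) -> In a l1 -> ~ In a l2.
Proof.
  induction l1 as [|b l1 IH]; simpl; intros Hnd H1 H2; [assumption|].
  inversion Hnd as [|? ? Hb Hnd']; subst. destruct H1 as [<-|H1].
  - apply Hb, in_or_app; auto.
  - exact (IH Hnd' H1 H2).
Qed.

Section EdgeDuality.

Variables (intV bdV : list nat).
Hypothesis Hnd : NoDup (intV ++ bdV).

Definition Dual_except (i j : nat) (O : nat -> R) (K : nat -> nat) : R :=
  prodR (fun x => if Nat.eqb x i || Nat.eqb x j then 1 else O x ^ K x) (intV ++ bdV).

Lemma Dual_split i j O K : In i (intV ++ bdV) -> In j (intV ++ bdV) -> i <> j ->
  Dual intV bdV O K = O i ^ K i * O j ^ K j * Dual_except i j O K.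
Proof. intros. apply (prodR_split2 (fun x => O x ^ K x)); assumption. Qed.

Lemma Dual_except_ext i j O O' K K' :
  (forall x, x <> i -> x <> j -> O x = O' x /\ K x = K' x) ->
  Dual_except i j O K = Dual_except i j O' K'.
Proof.
  intros H. apply prodR_ext. intros x _.
  destruct (Nat.eqb_spec x i), (Nat.eqb_spec x j); simpl; try reflexivity.
  destruct (H x) as [-> ->]; auto.
Qed.

Lemma Dual_HK i j h O K : In i (intV ++ bdV) -> In j (intV ++ bdV) -> i <> j ->
  Dual intV bdV O (HK (i, j) h K) =
  O i ^ h * O j ^ (K i + K j - h) * Dual_except i j O K.
Proof.
  intros Hi Hj Hij. rewrite (Dual_split i j) by assumption.
  unfold HK at 1 2; simpl. rewrite !Nat.eqb_refl.
  destruct (Nat.eqb_spec j i); [congruence|]. f_equal.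
  apply Dual_except_ext. intros x Hxi Hxj. unfold HK; simpl.
  apply Nat.eqb_neq in Hxi, Hxj. rewrite Hxi, Hxj. auto.
Qed.

Lemma HO_off i j v O x : x <> i -> x <> j -> HO intV (i, j) v O x = O x.
Proof.
  intros Hxi Hxj. unfold HO; simpl.
  apply Nat.eqb_neq in Hxi, Hxj. rewrite Hxi, Hxj. reflexivity.
Qed.

Lemma Dual_HO_bulk i j v O K : In i intV -> In j intV -> i <> j ->
  Dual intV bdV (HO intV (i, j) v O) K =
  (v * O i + (1 - v) * O j) ^ (K i + K j) * Dual_except i j O K.
Proof.
  intros Hi Hj Hij.
  rewrite (Dual_split i j) by (try apply in_or_app; auto).
  unfold HO at 1 2; simpl.
  rewrite !Nat.eqb_refl, (proj2 (inb_In i intV) Hi), (proj2 (inb_In j intV) Hj),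
    orb_true_r, pow_add; simpl. f_equal.
  apply Dual_except_ext. intros x Hxi Hxj. rewrite HO_off; auto.
Qed.

Lemma Dual_HO_boundary i j v O K : In i intV -> In j bdV ->
  Dual intV bdV (HO intV (i, j) v O) K =
  (v * O i + (1 - v) * O j) ^ K i * (O j ^ K j * Dual_except i j O K).
Proof.
  intros Hi Hj.
  pose proof (NoDup_app_disjoint _ _ _ Hnd Hi) as Hi'.
  assert (Hij : i <> j) by (intros ->; contradiction).
  assert (Hjb : inb j intV = false).
  { apply not_true_iff_false. rewrite inb_In. intros Hj'.
    exact (NoDup_app_disjoint _ _ _ Hnd Hj' Hj). }
  rewrite (Dual_split i j) by (try apply in_or_app; auto).
  unfold HO at 1 2; simpl.
  rewrite !Nat.eqb_refl, (proj2 (inb_In i intV) Hi), Hjb.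
  destruct (Nat.eqb_spec j i); [congruence|]; simpl.
  rewrite Rmult_assoc. do 2 f_equal.
  apply Dual_except_ext. intros x Hxi Hxj. rewrite HO_off; auto.
Qed.

Lemma is_RInt_edge_bulk i j O K : In i intV -> In j intV -> i <> j ->
  is_RInt (fun v => Dual intV bdV (HO intV (i, j) v O) K - Dual intV bdV O K) 0 1
    (avg_upto (K i + K j)
       (fun h => Dual intV bdV O (HK (i, j) h K) - Dual intV bdV O K)).
Proof.
  intros Hi Hj Hij.
  assert (Hi' : In i (intV ++ bdV)) by (apply in_or_app; auto).
  assert (Hj' : In j (intV ++ bdV)) by (apply in_or_app; auto).
  apply is_RInt_ext with
    (fun v => (v * O i + (1 - v) * O j) ^ (K i + K j) * Dual_except i j O K
              - Dual intV bdV O K).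
  { intros v _. rewrite Dual_HO_bulk; auto. }
  unfold avg_upto. rewrite (sumR_ext _ (fun h =>
    O i ^ h * O j ^ (K i + K j - h) * Dual_except i j O K - Dual intV bdV O K)).
  - apply is_RInt_pow_affine_avg.
  - intros h _. rewrite Dual_HK; auto.
Qed.

Lemma is_RInt_edge_boundary i j O K : In i intV -> In j bdV ->
  is_RInt (fun v => Dual intV bdV (HO intV (i, j) v O) K - Dual intV bdV O K) 0 1
    (avg_upto (K i)
       (fun h => Dual intV bdV O (HK (i, j) h K) - Dual intV bdV O K)).
Proof.
  intros Hi Hj.
  assert (Hi' : In i (intV ++ bdV)) by (apply in_or_app; auto).
  assert (Hj' : In j (intV ++ bdV)) by (apply in_or_app; auto).
  assert (Hij : i <> j) by (intros ->; exact (NoDup_app_disjoint _ _ _ Hnd Hi Hj)).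
  apply is_RInt_ext with
    (fun v => (v * O i + (1 - v) * O j) ^ K i * (O j ^ K j * Dual_except i j O K)
              - Dual intV bdV O K).
  { intros v _. rewrite Dual_HO_boundary; auto. }
  unfold avg_upto. rewrite (sumR_ext _ (fun h =>
    O i ^ h * O j ^ (K i - h) * (O j ^ K j * Dual_except i j O K) - Dual intV bdV O K)).
  - apply is_RInt_pow_affine_avg.
  - intros h Hh. apply in_seq in Hh. rewrite Dual_HK by auto.
    replace (K i + K j - h)%nat with (K i - h + K j)%nat by lia.
    rewrite pow_add. ring.
Qed.

End EdgeDuality.

Definition comb_eval {X} (c : list (R * X)) (g : X -> R) : R :=
  sumR (fun p => fst p * g (snd p)) c.

Lemma comb_eval_ext {X} c (f g : X -> R) :
  (forall k, f k = g k) -> comb_eval c f = comb_eval c g.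
Proof. intros H. unfold comb_eval. apply sumR_ext. intros p _. rewrite H. reflexivity. Qed.

Lemma is_RInt_comb_eval {X} (F : R -> X -> R) (w : X -> R) c :
  (forall k, is_RInt (fun v => F v k) 0 1 (w k)) ->
  is_RInt (fun v => comb_eval c (F v)) 0 1 (comb_eval c w).
Proof.
  intros H. induction c as [|p c IH]; unfold comb_eval; simpl.
  - pose proof (is_RInt_const (V := R_NormedModule) 0 1 0) as H0.
    unfold scal in H0; simpl in H0; unfold mult in H0; simpl in H0.
    rewrite Rmult_0_r in H0. exact H0.
  - apply (is_RInt_plus (V := R_NormedModule)); [|exact IH].
    apply (is_RInt_scal (V := R_NormedModule) (fun v => F v (snd p))), H.
Qed.

Lemma LO_ext intV E dE (f g : (nat -> R) -> R) O :
  (forall O', f O' = g O') -> LO intV E dE f O = LO intV E dE g O.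
Proof.
  intros H. unfold LO. apply sumR_ext. intros e _.
  apply RInt_ext. intros v _. rewrite !H. reflexivity.
Qed.

Lemma comb_eval_plus {X} c (f g : X -> R) :
  comb_eval c (fun k => f k + g k) = comb_eval c f + comb_eval c g.
Proof.
  unfold comb_eval. rewrite <- sumR_plus. apply sumR_ext. intros. ring.
Qed.

Lemma comb_eval_minus {X} c (f g : X -> R) :
  comb_eval c (fun k => f k - g k) = comb_eval c f - comb_eval c g.
Proof.
  unfold comb_eval. rewrite <- sumR_minus. apply sumR_ext. intros. ring.
Qed.

Lemma comb_eval_sumR {X A} c (F : A -> X -> R) l :
  comb_eval c (fun k => sumR (fun e => F e k) l) = sumR (fun e => comb_eval c (F e)) l.
Proof.
  unfold comb_eval. rewrite <- sumR_comm. apply sumR_ext. intros p _.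
  symmetry. apply sumR_scal.
Qed.

Lemma RInt_comb_eval_sub {X} (F : R -> X -> R) (G w : X -> R) c :
  (forall k, is_RInt (fun v => F v k - G k) 0 1 (w k)) ->
  RInt (fun v => comb_eval c (F v) - comb_eval c G) 0 1 = comb_eval c w.
Proof.
  intros H. apply is_RInt_unique.
  apply is_RInt_ext with (fun v => comb_eval c (fun k => F v k - G k)).
  - intros v _. apply comb_eval_minus.
  - apply is_RInt_comb_eval, H.
Qed.

Definition kmp_bulk (e : nat * nat) (g : (nat -> nat) -> R) (k : nat -> nat) : R :=
  avg_upto (k (fst e) + k (snd e)) (fun h => g (HK e h k) - g k).

Definition kmp_boundary (e : nat * nat) (g : (nat -> nat) -> R) (k : nat -> nat) : R :=
  avg_upto (k (fst e)) (fun h => g (HK e h k) - g k).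

Lemma LK_kmp E dE g k :
  LK E dE g k = sumR (fun e => kmp_bulk e g k) E + sumR (fun e => kmp_boundary e g k) dE.
Proof. reflexivity. Qed.

Lemma LO_comb_Dual intV bdV E dE O c : wf_graph intV bdV E dE ->
  LO intV E dE (fun O' => comb_eval c (Dual intV bdV O')) O =
  comb_eval c (LK E dE (Dual intV bdV O)).
Proof.
  intros (Hnd & HE & HdE & _).
  unfold LO. rewrite sumR_app.
  rewrite (comb_eval_ext _ _ (fun k => sumR _ E + sumR _ dE) (LK_kmp E dE _)).
  rewrite comb_eval_plus, !comb_eval_sumR.
  f_equal; apply sumR_ext; intros [i j] He; apply RInt_comb_eval_sub; intros k.
  - destruct (HE _ He) as (Hi & Hj & Hij). apply is_RInt_edge_bulk; assumption.
  - destruct (HdE _ He) as (Hi & Hj). apply is_RInt_edge_boundary; assumption.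
Qed.

Definition finite_comb {X} (Phi : (X -> R) -> R) : Prop :=
  exists c : list (R * X), forall g, Phi g = comb_eval c g.

Lemma finite_comb_at {X} (k : X) : finite_comb (fun g => g k).
Proof. exists ((1, k) :: nil). intros g. unfold comb_eval; simpl. ring. Qed.

Lemma finite_comb_plus {X} (P1 P2 : (X -> R) -> R) :
  finite_comb P1 -> finite_comb P2 -> finite_comb (fun g => P1 g + P2 g).
Proof.
  intros [c1 H1] [c2 H2]. exists (c1 ++ c2). intros g.
  unfold comb_eval. rewrite sumR_app, H1, H2. reflexivity.
Qed.

Lemma finite_comb_scal {X} (P : (X -> R) -> R) a :
  finite_comb P -> finite_comb (fun g => a * P g).
Proof.
  intros [c H]. exists (map (fun p => (a * fst p, snd p)) c). intros g.
  rewrite H. unfold comb_eval. clear H.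
  induction c as [|p c IH]; simpl; [ring|]. rewrite <- IH. ring.
Qed.

Lemma finite_comb_minus {X} (P1 P2 : (X -> R) -> R) :
  finite_comb P1 -> finite_comb P2 -> finite_comb (fun g => P1 g - P2 g).
Proof.
  intros H1 H2. destruct (finite_comb_plus _ _ H1 (finite_comb_scal _ (-1) H2)) as [c H].
  exists c. intros g. rewrite <- H. ring.
Qed.

Lemma finite_comb_sumR {X A} (Phi : A -> (X -> R) -> R) l :
  (forall x, In x l -> finite_comb (Phi x)) ->
  finite_comb (fun g => sumR (fun x => Phi x g) l).
Proof.
  induction l as [|x l IH]; simpl; intros H.
  - exists nil. reflexivity.
  - apply finite_comb_plus; auto.
Qed.

Lemma finite_comb_avg_upto {X} n (Phi : nat -> (X -> R) -> R) :
  (forall h, finite_comb (Phi h)) -> finite_comb (fun g => avg_upto n (fun h => Phi h g)).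
Proof.
  intros H. unfold avg_upto. apply finite_comb_scal, finite_comb_sumR. auto.
Qed.

Lemma finite_comb_LK E dE k : finite_comb (fun g => LK E dE g k).
Proof.
  apply finite_comb_plus; apply finite_comb_sumR; intros e _;
    apply finite_comb_avg_upto; intros h; apply finite_comb_minus; apply finite_comb_at.
Qed.

Lemma finite_comb_iterL_LK E dE n k : finite_comb (fun g => iterL (LK E dE) n g k).
Proof.
  revert k. induction n as [|n IH]; intros k; simpl.
  - apply finite_comb_at.
  - destruct (finite_comb_LK E dE k) as [c Hc].
    destruct (finite_comb_sumR (fun p g => fst p * iterL (LK E dE) n g (snd p)) c)
      as [c' Hc'].
    { intros p _. apply finite_comb_scal, IH. }
    exists c'. intros g. rewrite Hc. apply Hc'.
Qed.

Lemma iterL_Sr {X} (L : (X -> R) -> (X -> R)) n f :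
  iterL L (S n) f = iterL L n (L f).
Proof. induction n as [|n IH]; simpl; [reflexivity|]. simpl in IH. rewrite IH. reflexivity. Qed.

Lemma iterL_duality intV bdV E dE : wf_graph intV bdV E dE -> forall n O K,
  iterL (LO intV E dE) n (fun O' => Dual intV bdV O' K) O =
  iterL (LK E dE) n (Dual intV bdV O) K.
Proof.
  intros Hwf n. induction n as [|n IH]; intros O K; [reflexivity|].
  destruct (finite_comb_iterL_LK E dE n K) as [c Hc].
  change (LO intV E dE (iterL (LO intV E dE) n (fun O' => Dual intV bdV O' K)) O =
          iterL (LK E dE) (S n) (Dual intV bdV O) K).
  rewrite (LO_ext _ _ _ _ (fun O' => comb_eval c (Dual intV bdV O')))
    by (intros O'; rewrite IH; apply Hc).
  rewrite LO_comb_Dual, iterL_Sr, Hc by assumption. reflexivity.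
Qed.

Lemma Rabs_LK_le E dE g k B :
  (forall e h, In e (E ++ dE) -> (h <= k (fst e) + k (snd e))%nat ->
     Rabs (g (HK e h k)) <= B) ->
  Rabs (g k) <= B ->
  Rabs (LK E dE g k) <= 2 * INR (length (E ++ dE)) * B.
Proof.
  intros Hmove Hk.
  assert (Hedge : forall e n, In e (E ++ dE) -> (n <= k (fst e) + k (snd e))%nat ->
            Rabs (avg_upto n (fun h => g (HK e h k) - g k)) <= 2 * B).
  { intros e n He Hn. apply Rabs_avg_upto_le. intros h Hh.
    eapply Rle_trans; [apply Rabs_triang|]. rewrite Rabs_Ropp.
    assert (Rabs (g (HK e h k)) <= B) by (apply Hmove; [assumption | lia]). lra. }
  rewrite LK_kmp, length_app, plus_INR.
  replace (2 * (INR (length E) + INR (length dE)) * B)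
    with (INR (length E) * (2 * B) + INR (length dE) * (2 * B)) by ring.
  rewrite <- !sumR_const.
  eapply Rle_trans; [apply Rabs_triang|].
  apply Rplus_le_compat; (eapply Rle_trans; [apply Rabs_sumR_le | apply sumR_le]);
    intros e He; apply Hedge; try (apply in_or_app; auto); lia.
Qed.

Lemma exists_Rabs_bound (O : nat -> R) s :
  exists M, forall l, In l s -> Rabs (O l) <= M.
Proof.
  induction s as [|a s [M HM]].
  - exists 0. intros l [].
  - exists (Rmax (Rabs (O a)) M). intros l [<-|Hl].
    + apply Rmax_l.
    + eapply Rle_trans; [apply HM; assumption | apply Rmax_r].
Qed.

Section KMPBound.

Variables (intV bdV : list nat) (E dE : list (nat * nat)).
Hypothesis Hwf : wf_graph intV bdV E dE.

Lemma wf_edge_ends e : In e (E ++ dE) ->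
  In (fst e) (intV ++ bdV) /\ In (snd e) (intV ++ bdV) /\ fst e <> snd e.
Proof.
  destruct Hwf as (Hnd & HE & HdE & _). intros He.
  apply in_app_or in He as [He | He].
  - destruct (HE e He) as (Hi & Hj & Hij). repeat split; try apply in_or_app; auto.
  - destruct (HdE e He) as (Hi & Hj). repeat split; try apply in_or_app; auto.
    intros Hij. rewrite Hij in Hi. exact (NoDup_app_disjoint _ _ _ Hnd Hi Hj).
Qed.

Lemma Dual_const_HK M e h k : In e (E ++ dE) -> (h <= k (fst e) + k (snd e))%nat ->
  Dual intV bdV (fun _ => M) (HK e h k) = Dual intV bdV (fun _ => M) k.
Proof.
  intros He Hh. destruct e as [i j]. destruct (wf_edge_ends _ He) as (Hi & Hj & Hij).
  destruct Hwf as [Hnd _]. simpl in *.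
  rewrite Dual_HK, (Dual_split _ _ Hnd i j) by assumption.
  rewrite <- !pow_add. do 2 f_equal. lia.
Qed.

Lemma Rabs_iterL_LK_Dual_le O M n k :
  (forall l, In l (intV ++ bdV) -> Rabs (O l) <= M) ->
  Rabs (iterL (LK E dE) n (Dual intV bdV O) k) <=
  (2 * INR (length (E ++ dE))) ^ n * Dual intV bdV (fun _ => M) k.
Proof.
  intros HM. revert k. induction n as [|n IH]; intros k; simpl.
  - rewrite Rmult_1_l. apply Rabs_prodR_le. intros l Hl.
    rewrite <- RPow_abs. apply pow_incr. split; [apply Rabs_pos | auto].
  - rewrite Rmult_assoc. apply Rabs_LK_le; [|apply IH].
    intros e h He Hh. rewrite <- (Dual_const_HK M e h k) by assumption. apply IH.
Qed.

Lemma ex_series_iterL_LK_Dual O K t :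
  ex_series (fun n => t ^ n / INR (fact n) * iterL (LK E dE) n (Dual intV bdV O) K).
Proof.
  destruct (exists_Rabs_bound O (intV ++ bdV)) as [M HM].
  set (A := 2 * INR (length (E ++ dE))).
  set (c := Dual intV bdV (fun _ => M) K).
  apply (ex_series_le (K := R_AbsRing) (V := R_CompleteNormedModule) _
           (fun n => c * ((A * Rabs t) ^ n / INR (fact n)))).
  - intros n. change norm with Rabs; simpl.
    assert (Hf : 0 < INR (fact n)) by apply INR_fact_lt_0.
    rewrite Rabs_mult, Rabs_div, <- RPow_abs, (Rabs_right (INR (fact n))) by lra.
    rewrite Rpow_mult_distr.
    replace (c * (A ^ n * Rabs t ^ n / INR (fact n)))
      with (Rabs t ^ n / INR (fact n) * (A ^ n * c)) by (unfold Rdiv; ring).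
    apply Rmult_le_compat_l.
    + apply Rdiv_le_0_compat; [apply pow_le, Rabs_pos | exact Hf].
    + apply Rabs_iterL_LK_Dual_le. exact HM.
  - apply (ex_series_scal_l (K := R_AbsRing) (V := R_NormedModule)).
    eexists. apply (is_exp_Reals (A * Rabs t)).
Qed.

End KMPBound.

Theorem mainTheorem6 (intV bdV : list nat) (E dE : list (nat * nat)) (T : nat -> R)
    (O : nat -> R) (K : nat -> nat) (t : R) :
  wf_graph intV bdV E dE ->
  (forall j, In j bdV -> 0 < T j) ->
  (forall i, In i (intV ++ bdV) -> 0 <= O i) ->
  (forall j, In j bdV -> O j = T j) ->
  0 <= t ->
  exists l : R,
    sg_value (LO intV E dE) (fun O' => Dual intV bdV O' K) t O l /\
    sg_value (LK E dE) (fun K' => Dual intV bdV O K') t K l.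
Proof.
  intros Hwf _ _ _ _.
  pose proof (ex_series_iterL_LK_Dual intV bdV E dE Hwf O K t) as Hconv.
  exists (Series (fun n => t ^ n / INR (fact n) * iterL (LK E dE) n (Dual intV bdV O) K)).
  split; unfold sg_value.
  - eapply is_series_ext; [|apply Series_correct, Hconv].
    intros n. rewrite iterL_duality by assumption. reflexivity.
  - apply Series_correct, Hconv.
Qed.
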